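(* For $0<x<\frac12$, $$\prod_{k=0}^{\infty}\left(1+x^{2^k}+(2x)^{2^k}\right)=\sum_{n=0}^{\infty}c(n)x^n .$$
   Context: For $n\ge 0$, $c(n)=\sum_{i=0}^{n}\left(\binom{n}{i}\bmod 2\right)2^{i}$, the integer whose binary digits form the $n$-th row of Pascal's triangle modulo $2$ (so $c(0),c(1),\dots=1,3,5,15,17,51,\dots$). *)

From Stdlib Require Import Reals Arith List.
Import ListNotations.
From Coquelicot Require Import Coquelicot.
Open Scope R_scope.

Fixpoint binom (n k : nat) : nat :=
  match n, k with
  | _, O => 1%nat
  | O, S _ => 0%nat
  | S n', S k' => (binom n' k' + binom n' k)%nat
  end.

Fixpoint csum (n m : nat) : nat :=
  match m with
  | O => 0%nat
  | S m' => (csum n m' + (binom n m' mod 2) * 2 ^ m')%nat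
  end.

Definition c (n : nat) : nat := csum n (S n).

Fixpoint partial_prod (x : R) (N : nat) : R :=
  match N with
  | O => 1
  | S N' => partial_prod x N' * (1 + x ^ (2 ^ N') + (2 * x) ^ (2 ^ N'))
  end.

Example c_values : List.map c [0;1;2;3;4;5]%nat = [1;3;5;15;17;51]%nat.
Proof. reflexivity. Qed.

From Stdlib Require Import Reals Lia Lra.
From Coquelicot Require Import Coquelicot.
Open Scope R_scope.

(* Write P_n(q) = row_poly q n = sum_i (binom n i mod 2) q^i, so that c(n) = P_n(2).  Modulo 2,
   binom (2m) (2i) = binom m i and binom (2m) (2i+1) = 0 (Lucas), which gives
   P_(2n)(q) = P_n(q^2) and P_(2n+1)(q) = (1 + q) P_(2n)(q).  Splitting a sum into
   even and odd indices then shows by induction on N that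
   prod_(k<N) (1 + x^(2^k) + (q x)^(2^k)) = sum_(n < 2^N) P_n(q) x^n.
   At q = 2 we have c(n) < 2^(n+1), so the series converges for |x| < 1/2 and the
   partial products are the subsequence of its partial sums at 2^N - 1. *)

Lemma binom_gt n k : (n < k)%nat -> binom n k = 0%nat.
Proof.
  revert k; induction n as [|n IH]; intros [|k] H; simpl; try lia.
  rewrite !IH; lia.
Qed.

Lemma binom_0_r n : binom n 0 = 1%nat.
Proof. now destruct n. Qed.

Lemma binom_1_r n : binom n 1 = n.
Proof. induction n as [|n IH]; [reflexivity|]. simpl. now rewrite binom_0_r, IH. Qed.

Lemma binom_SS n k :
  binom (S (S n)) (S (S k)) = (binom n k + 2 * binom n (S k) + binom n (S (S k)))%nat.
Proof. cbn [binom]. lia. Qed.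

Lemma mod2_add_double a b c : ((a + 2 * b + c) mod 2 = (a + c) mod 2)%nat.
Proof.
  rewrite <- Nat.add_assoc, (Nat.add_comm (2 * b)), Nat.add_assoc, Nat.mul_comm.
  apply Nat.Div0.mod_add.
Qed.

Lemma binom_double_mod2 m i :
  (binom (2 * m) (2 * i) mod 2 = binom m i mod 2 /\ binom (2 * m) (2 * i + 1) mod 2 = 0)%nat.
Proof.
  revert i; induction m as [|m IH]; intros i.
  { destruct i as [|i]; [split; reflexivity|].
    rewrite !binom_gt by lia. split; reflexivity. }
  replace (2 * S m)%nat with (S (S (2 * m))) by lia.
  destruct i as [|i].
  { rewrite !binom_0_r. split; [reflexivity|].
    rewrite Nat.add_0_l, binom_1_r.
    replace (S (S (2 * m))) with (2 * (m + 1))%nat by lia.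
    now rewrite Nat.mul_comm, Nat.Div0.mod_mul. }
  destruct (IH i) as [Heven_i Hodd_i], (IH (S i)) as [Heven_Si Hodd_Si].
  replace (2 * S i)%nat with (S (S (2 * i))) by lia.
  replace (S (S (2 * i)) + 1)%nat with (S (S (2 * i + 1))) by lia.
  rewrite !binom_SS, !mod2_add_double.
  replace (S (2 * i)) with (2 * i + 1)%nat by lia.
  replace (S (S (2 * i + 1))) with (2 * S i + 1)%nat by lia.
  replace (S (2 * i + 1)) with (2 * S i)%nat by lia.
  rewrite !(Nat.Div0.add_mod (binom (2 * m) _)), Heven_i, Heven_Si, Hodd_i, Hodd_Si.
  split; [|reflexivity].
  cbn [binom]. now rewrite <- Nat.Div0.add_mod.
Qed.

Fixpoint fsum (f : nat -> R) (K : nat) : R :=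
  match K with O => 0 | S K' => fsum f K' + f K' end.

Lemma fsum_ext f g K : (forall n, f n = g n) -> fsum f K = fsum g K.
Proof. intros H; induction K; simpl; [reflexivity|now rewrite IHK, H]. Qed.

Lemma fsum_const_0 K : fsum (fun _ => 0) K = 0.
Proof. induction K; simpl; [reflexivity|rewrite IHK; ring]. Qed.

Lemma fsum_scal k f K : fsum (fun n => k * f n) K = k * fsum f K.
Proof. induction K; simpl; [ring|rewrite IHK; ring]. Qed.

Lemma fsum_even_odd f K :
  fsum f (2 * K) = fsum (fun n => f (2 * n)%nat) K + fsum (fun n => f (S (2 * n))) K.
Proof.
  induction K as [|K IH]; [simpl; ring|].
  replace (2 * S K)%nat with (S (S (2 * K))) by lia.
  cbn [fsum]. rewrite IH. ring.
Qed.

Lemma sum_n_fsum (a : nat -> R) N : sum_n a N = fsum a (S N).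
Proof.
  induction N as [|N IH]; [rewrite sum_O; simpl; ring|].
  now rewrite sum_Sn, IH.
Qed.

Definition row_term (q : R) (n i : nat) : R := INR (binom n i mod 2) * q ^ i.

Definition row_poly (q : R) (n : nat) : R := fsum (row_term q n) (S n).

Lemma fsum_row_term q n m : (n < m)%nat -> fsum (row_term q n) m = row_poly q n.
Proof.
  intros Hnm; induction Hnm as [|m Hnm IH]; [reflexivity|].
  simpl fsum. rewrite IH. unfold row_term. rewrite binom_gt by lia. simpl. ring.
Qed.

Lemma row_poly_double q n : row_poly q (2 * n) = row_poly (q * q) n.
Proof.
  rewrite <- (fsum_row_term q (2 * n) (2 * S n)) by lia.
  rewrite fsum_even_odd, (fsum_ext (fun i => row_term q (2 * n) (S (2 * i))) (fun _ => 0)),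
    fsum_const_0, Rplus_0_r.
  - apply fsum_ext; intros i. unfold row_term.
    rewrite (proj1 (binom_double_mod2 n i)), Rpow_mult_distr, <- pow_add.
    now replace (2 * i)%nat with (i + i)%nat by lia.
  - intros i. unfold row_term. replace (S (2 * i)) with (2 * i + 1)%nat by lia.
    rewrite (proj2 (binom_double_mod2 n i)).
    simpl. ring.
Qed.

Lemma row_term_succ_double q n i :
  row_term q (S (2 * n)) (S i) = row_term q (2 * n) (S i) + q * row_term q (2 * n) i.
Proof.
  unfold row_term. cbn [binom pow].
  destruct (Nat.Even_or_Odd i) as [[j ->]|[j ->]]; destruct (binom_double_mod2 n j) as [_ Hodd].
  - replace (S (2 * j)) with (2 * j + 1)%nat by lia.
    rewrite Nat.Div0.add_mod, Hodd, Nat.add_0_r, Nat.Div0.mod_mod. simpl. ring.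
  - rewrite Nat.Div0.add_mod, Hodd, Nat.add_0_l, Nat.Div0.mod_mod. simpl. ring.
Qed.

Lemma row_poly_succ_double q n : row_poly q (S (2 * n)) = (1 + q) * row_poly q (2 * n).
Proof.
  assert (Hrow : forall m, fsum (row_term q (S (2 * n))) (S m)
                   = fsum (row_term q (2 * n)) (S m) + q * fsum (row_term q (2 * n)) m).
  { induction m as [|m IH].
    - unfold row_term; simpl. rewrite !binom_0_r. simpl. ring.
    - change (fsum (row_term q (S (2 * n))) (S (S m)))
        with (fsum (row_term q (S (2 * n))) (S m) + row_term q (S (2 * n)) (S m)).
      rewrite IH, row_term_succ_double. simpl. ring. }
  unfold row_poly at 1. rewrite Hrow, !fsum_row_term by lia. ring.
Qed.

Fixpoint dyadic_prod (q x : R) (N : nat) : R :=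
  match N with
  | O => 1
  | S N' => dyadic_prod q x N' * (1 + x ^ (2 ^ N') + (q * x) ^ (2 ^ N'))
  end.

Lemma dyadic_prod_S_l q x N :
  dyadic_prod q x (S N) = (1 + x + q * x) * dyadic_prod (q * q) (x * x) N.
Proof.
  induction N as [|N IH]; [simpl; ring|].
  change (dyadic_prod q x (S (S N)))
    with (dyadic_prod q x (S N) * (1 + x ^ (2 ^ S N) + (q * x) ^ (2 ^ S N))).
  rewrite IH. simpl dyadic_prod.
  replace (q * q * (x * x)) with ((q * x) * (q * x)) by ring.
  rewrite !Rpow_mult_distr.
  replace (2 ^ S N)%nat with (2 ^ N + 2 ^ N)%nat by (simpl; lia).
  rewrite !pow_add. ring.
Qed.

Lemma dyadic_prod_row_poly N : forall q x,
  dyadic_prod q x N = fsum (fun n => row_poly q n * x ^ n) (2 ^ N).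
Proof.
  induction N as [|N IH]; intros q x.
  { unfold row_poly, row_term. simpl. ring. }
  rewrite dyadic_prod_S_l, IH.
  replace (2 ^ S N)%nat with (2 * 2 ^ N)%nat by (simpl; lia).
  rewrite fsum_even_odd,
    (fsum_ext (fun n => row_poly q (2 * n) * x ^ (2 * n)) (fun n => row_poly (q * q) n * (x * x) ^ n)),
    (fsum_ext (fun n => row_poly q (S (2 * n)) * x ^ S (2 * n))
              (fun n => ((1 + q) * x) * (row_poly (q * q) n * (x * x) ^ n))),
    fsum_scal; [ring| |].
  - intros n. rewrite row_poly_succ_double, row_poly_double, Rpow_mult_distr, <- pow_add.
    replace (S (2 * n)) with (S (n + n)) by lia. simpl. ring.
  - intros n. rewrite row_poly_double, Rpow_mult_distr, <- pow_add.
    now replace (2 * n)%nat with (n + n)%nat by lia.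
Qed.

Lemma partial_prod_dyadic_prod x N : partial_prod x N = dyadic_prod 2 x N.
Proof. induction N; simpl; [reflexivity|now rewrite IHN]. Qed.

Lemma INR_csum n m : INR (csum n m) = fsum (row_term 2 n) m.
Proof.
  induction m as [|m IH]; [reflexivity|].
  simpl csum. simpl fsum. rewrite plus_INR, mult_INR, pow_INR, IH.
  reflexivity.
Qed.

Lemma INR_c n : INR (c n) = row_poly 2 n.
Proof. apply INR_csum. Qed.

Lemma csum_lt_pow2 n m : (csum n m < 2 ^ m)%nat.
Proof.
  induction m as [|m IH]; [simpl; lia|].
  cbn [csum]. rewrite Nat.pow_succ_r'.
  assert (Hbit : (binom n m mod 2 <= 1)%nat)
    by (pose proof (Nat.mod_upper_bound (binom n m) 2); lia).
  pose proof (Nat.mul_le_mono_r _ _ (2 ^ m) Hbit).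
  lia.
Qed.

Lemma partial_prod_sum_n x N :
  partial_prod x N = sum_n (fun n => INR (c n) * x ^ n) (2 ^ N - 1).
Proof.
  rewrite sum_n_fsum, partial_prod_dyadic_prod, dyadic_prod_row_poly.
  replace (S (2 ^ N - 1)) with (2 ^ N)%nat by (pose proof (Nat.pow_nonzero 2 N); lia).
  apply fsum_ext; intros n. now rewrite INR_c.
Qed.

Lemma ex_series_c_pow x : Rabs x < 1/2 -> ex_series (fun n => INR (c n) * x ^ n).
Proof.
  intros Hx.
  apply (ex_series_le (fun n => INR (c n) * x ^ n) (fun n => 2 * (2 * Rabs x) ^ n)).
  - intros n. change norm with Rabs. simpl.
    assert (Hc : INR (c n) < 2 * 2 ^ n).
    { pose proof (lt_INR _ _ (csum_lt_pow2 n (S n))) as Hlt.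
      rewrite pow_INR, <- tech_pow_Rmult in Hlt.
      replace (INR 2) with 2 in Hlt by (simpl; ring). exact Hlt. }
    pose proof (pow_le (Rabs x) n (Rabs_pos x)).
    rewrite Rabs_mult, Rabs_pos_eq, <- RPow_abs, Rpow_mult_distr by apply pos_INR.
    nra.
  - apply (ex_series_scal_l 2 (fun n => (2 * Rabs x) ^ n)), ex_series_geom.
    rewrite Rabs_pos_eq; pose proof (Rabs_pos x); lra.
Qed.

Theorem corollary1 (x : R) (hx : 0 < x < 1/2) :
  exists L : R,
    is_lim_seq (fun N => partial_prod x N) L /\
    is_series (fun n => INR (c n) * x ^ n) L.
Proof.
  set (a := fun n => INR (c n) * x ^ n).
  assert (Hex : ex_series a) by (apply ex_series_c_pow; rewrite Rabs_pos_eq; lra).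
  exists (Series a); split; [|now apply Series_correct].
  apply (is_lim_seq_ext (fun N => sum_n a (2 ^ N - 1))).
  { intros N. symmetry. apply partial_prod_sum_n. }
  apply (is_lim_seq_subseq (sum_n a) (Series a) (fun N => (2 ^ N - 1)%nat)).
  - apply eventually_subseq; intros n.
    pose proof (Nat.pow_nonzero 2 n). rewrite Nat.pow_succ_r'. lia.
  - now apply Series_correct.
Qed.
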